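(* Let $n\ge 1$ and $j\ge 1$ be integers. There are $n$ Bernoulli arms whose means are i.i.d. uniform on $(0,1)$; given the means, each arm has i.i.d. Bernoulli observations with success probability equal to its mean, independent across arms. Let $B_e$ be the event that the arm with the largest mean has failures in all of its first $j$ observations, and let $N_{nb}$ be the number of other arms whose first $j$ observations are all failures. Then $$\mathbb{P}(B_e)=\frac{n!\,j!}{(n+j)!},\qquad \mathbb{E}[N_{nb}]=\frac{n}{j+1}-\frac{n!\,j!}{(n+j)!}.$$ *)

From HB Require Import structures.
From mathcomp Require Import all_boot all_order all_algebra.
From mathcomp Require Import all_classical all_reals all_analysis.
Set Implicit Arguments. Unset Strict Implicit. Unset Printing Implicit Defensive.
Import Order.TTheory GRing.Theory Num.Theory.
Local Open Scope ring_scope.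
Local Open Scope classical_set_scope.

Section BanditModel.
Variable R : realType.

Definition vcons (n : nat) (x : R) (v : 'I_n -> R) : 'I_n.+1 -> R :=
  fun i => match unlift ord0 i with Some k => v k | None => x end.

(* Integral over the unit cube [0,1]^n with respect to the product of n
   uniform(0,1) laws (= Lebesgue measure on [0,1]), written as an iterated
   integral (equal to the product-measure integral by Tonelli for the
   nonnegative measurable integrands used below). *)
Fixpoint cube_int (n : nat) : (('I_n -> R) -> \bar R) -> \bar R :=
  match n return (('I_n -> R) -> \bar R) -> \bar R with
  | 0 => fun f => f (fun _ => 0)
  | m.+1 => fun f =>
      (\int[@lebesgue_measure R]_(x in `[0%R, 1%R]) cube_int (fun v => f (vcons x v)))%E
  end.

(* Observations: x i k = true iff the k-th observation (k < j) of arm i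
   is a success. *)
Definition obs (n j : nat) := {ffun 'I_n -> {ffun 'I_j -> bool}}.

Definition obs_weight (n j : nat) (mu : 'I_n -> R) (x : obs n j) : R :=
  \prod_(i < n) \prod_(k < j) (if x i k then mu i else 1 - mu i).

(* Expectation of a nonnegative quantity g(means, first j observations)
   under the hierarchical model: means i.i.d. uniform(0,1), observations
   conditionally i.i.d. Bernoulli(mean). *)
Definition bandit_expect (n j : nat) (g : ('I_n -> R) -> obs n j -> R) : \bar R :=
  cube_int (fun mu => (\sum_(x : obs n j) obs_weight mu x * g mu x)%:E).

Definition bandit_prob (n j : nat) (E : ('I_n -> R) -> obs n j -> bool) : \bar R :=
  bandit_expect (fun mu x => (E mu x)%:R).

(* The arm with the largest mean (ties, a null event, broken by
   [pick], i.e. the smallest index among maximizers). *)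
Definition best_arm (n : nat) (mu : 'I_n -> R) : option 'I_n :=
  [pick i | [forall k, mu k <= mu i]].

Definition all_fail (n j : nat) (x : obs n j) (i : 'I_n) : bool :=
  [forall k, ~~ x i k].

Definition Be (n j : nat) (mu : 'I_n -> R) (x : obs n j) : bool :=
  if best_arm mu is Some i then all_fail x i else false.

Definition Nnb (n j : nat) (mu : 'I_n -> R) (x : obs n j) : nat :=
  #|[set i : 'I_n | (Some i != best_arm mu) && all_fail x i]|.

End BanditModel.

From HB Require Import structures.
From mathcomp Require Import all_boot all_order all_algebra.
From mathcomp Require Import all_classical all_reals all_analysis.
From mathcomp Require Import measurable_realfun beta_distribution.
From mathcomp Require Import ring.
Import Order.TTheory GRing.Theory Num.Theory.
Import numFieldNormedType.Exports.
Local Open Scope ring_scope.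
Local Open Scope classical_set_scope.

(* Given the means, B_e has probability (1 - M)^j, M the largest mean, and
   E[N_nb | means] = sum_i (1 - mu_i)^j - (1 - M)^j.  Integrating out one
   uniform mean at a time, int_0^1 Q(max(c, x)) dx = c Q(c) + int_c^1 Q is again
   a polynomial in c; hence E[p(max(c, U_1, ..., U_n))] = Q_n(c) for a
   polynomial Q_n with Q_n(1) = p(1) and Q_n' = X^n p'.  For p = (1 - X)^j this
   gives E[(1 - M)^j] = Q_n(0) = j int_0^1 x^n (1 - x)^(j-1) dx = n! j! / (n+j)!,
   a beta integral, while E[sum_i (1 - U_i)^j] = n / (j + 1). *)

Section PolyIntegral.
Context {R : realType}.
Notation mu := (@lebesgue_measure R).

Definition poly_prim (p : {poly R}) : {poly R} :=
  \poly_(i < (size p).+1) (if i is k.+1 then p`_k / k.+1%:R else 0).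

Lemma coef_poly_prim p i :
  (poly_prim p)`_i = if i is k.+1 then p`_k / k.+1%:R else 0.
Proof.
rewrite coef_poly; case: ltnP => //; case: i => // k.
by rewrite ltnS => /(nth_default 0) ->; rewrite mul0r.
Qed.

Lemma deriv_poly_prim p : deriv (poly_prim p) = p.
Proof.
apply/polyP => k; rewrite coef_deriv coef_poly_prim.
by rewrite -[_ *+ k.+1]mulr_natr divfK // pnatr_eq0.
Qed.

Lemma poly_primZ a p : poly_prim (a *: p) = a *: poly_prim p.
Proof.
by apply/polyP => -[|k]; rewrite coefZ !coef_poly_prim ?mulr0 // coefZ mulrA.
Qed.

Lemma integral_deriv_poly (P : {poly R}) a b : a <= b ->
  (\int[mu]_(x in `[a, b]) ((deriv P).[x])%:E = (P.[b] - P.[a])%:E)%E.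
Proof.
rewrite le_eqVlt => /predU1P[<-|ab].
  by rewrite set_itv1 integral_set1 subrr.
rewrite (@continuous_FTC2 _ _ (horner P)) ?EFinB //.
- by apply: continuous_subspaceT => x; exact: continuous_horner.
- split.
  + by move=> x _; exact: derivable_horner.
  + exact/cvg_at_right_filter/continuous_horner.
  + exact/cvg_at_left_filter/continuous_horner.
- by move=> x _; rewrite -derivE.
Qed.

Lemma integral_poly_prim_onemX j :
  (poly_prim ((1 - 'X) ^+ j)).[1] - (poly_prim ((1 - 'X) ^+ j)).[0] = j.+1%:R^-1.
Proof.
apply: EFin_inj; rewrite -beta_fun1Sn.
rewrite -(@integral_deriv_poly (poly_prim _) 0 1 ler01) deriv_poly_prim.
rewrite EFin_beta_fun integral_XMonemX_restrict setTI.
apply: eq_integral => x _; congr EFin.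
by rewrite /XMonemX /= expr0 mul1r !hornerE /unstable.onem.
Qed.

Lemma measurable_fun_poly_max (Q q : {poly R}) (K c : R) (D : set R) :
  measurable_fun D (fun x => (Q.[Num.max c x] + K + q.[x])%:E).
Proof.
apply/measurable_EFinP.
apply: measurable_funD; last exact: measurable_poly.
apply: measurable_funD; last exact: measurable_cst.
exact: measurableT_comp (@measurable_poly _ Q setT)
  (measurable_maxr (measurable_cst c) (@measurable_id _ _ D)).
Qed.

Lemma integral_poly_max (Q q : {poly R}) (K c : R) : 0 <= c <= 1 ->
  (\int[mu]_(x in `[0%R, 1%R]) (Q.[Num.max c x] + K + q.[x])%:E =
  (c * Q.[c] + (poly_prim Q).[1] - (poly_prim Q).[c] + K
    + ((poly_prim q).[1] - (poly_prim q).[0]))%:E)%E.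
Proof.
move=> /andP[c0 c1].
rewrite (@itv_bndbnd_setU _ _ _ (BLeft c)) ?bnd_simp //.
rewrite integral_setU //; last 2 first.
- exact: measurable_fun_poly_max.
- apply/disj_setPS => x [] /=; rewrite !in_itv /= => /andP[_ xc] /andP[cx _].
  by move: (lt_le_trans xc cx); rewrite ltxx.
rewrite integral_itv_bndo_bndc; last exact: measurable_fun_poly_max.
(* On each piece the integrand is the derivative of an explicit polynomial,
   so no integrability side conditions arise. *)
transitivity
  ((\int[mu]_(x in `[0%R, c]) ((deriv ((Q.[c] + K) *: 'X + poly_prim q)).[x])%:E) +
   (\int[mu]_(x in `[c, 1%R]) ((deriv (poly_prim Q + K *: 'X + poly_prim q)).[x])%:E))%E.
  congr (_ + _)%E; apply: eq_integral => x; rewrite inE /= in_itv /=.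
    move=> /andP[_ xc].
    by rewrite derivD derivZ derivX deriv_poly_prim !hornerE /= max_l.
  move=> /andP[cx _].
  by rewrite !derivD derivZ derivX !deriv_poly_prim !hornerE /= max_r.
rewrite !integral_deriv_poly // -EFinD; congr EFin.
by rewrite !hornerE /=; ring.
Qed.

End PolyIntegral.

Section CubeIntegral.
Context {R : realType}.
Notation mu := (@lebesgue_measure R).

Definition maxv {n} (c : R) (v : 'I_n -> R) := \big[Num.max/c]_(i < n) v i.

Definition in_unit_cube {n} (v : 'I_n -> R) := forall i, 0 <= v i <= 1.

Lemma vcons0 n (x : R) (v : 'I_n -> R) : vcons x v ord0 = x.
Proof. by rewrite /vcons unlift_none. Qed.

Lemma vconsS n (x : R) (v : 'I_n -> R) i : vcons x v (lift ord0 i) = v i.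
Proof. by rewrite /vcons liftK. Qed.

Lemma big_vcons n (x : R) (v : 'I_n -> R) (F : R -> R) :
  \sum_(i < n.+1) F (vcons x v i) = F x + \sum_(i < n) F (v i).
Proof. by rewrite big_ord_recl vcons0; under eq_bigr do rewrite vconsS. Qed.

Lemma maxv_vcons n (c x : R) (v : 'I_n -> R) :
  maxv c (vcons x v) = maxv (Num.max c x) v.
Proof.
rewrite /maxv big_ord_recl vcons0.
under eq_bigr do rewrite vconsS.
elim/big_rec2: _ => [|i y1 y2 _ <-]; first by rewrite maxC.
by rewrite maxCA.
Qed.

Lemma in_unit_cube_vcons n x (v : 'I_n -> R) :
  0 <= x <= 1 -> in_unit_cube v -> in_unit_cube (vcons x v).
Proof. by move=> hx hv i; rewrite /vcons; case: unliftP. Qed.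

Lemma eq_cube_int n (f g : ('I_n -> R) -> \bar R) :
  (forall v, in_unit_cube v -> f v = g v) -> cube_int f = cube_int g.
Proof.
elim: n f g => [|n IH] f g fg /=; first by apply: fg => -[].
apply: eq_integral => x; rewrite inE /= in_itv /= => hx.
by apply: IH => v hv; apply: fg; exact: in_unit_cube_vcons.
Qed.

(* [Q_(n+1)(c) = int_0^1 Q_n(max(c, x)) dx = c Q_n(c) + int_c^1 Q_n] *)
Fixpoint cube_max_poly n (p : {poly R}) : {poly R} :=
  if n is m.+1 then
    let Q := cube_max_poly m p in 'X * Q + ((poly_prim Q).[1])%:P - poly_prim Q
  else p.

Lemma cube_int_max_sum n (p q : {poly R}) (c d : R) (f : ('I_n -> R) -> \bar R) :
  0 <= c <= 1 ->
  (forall v, in_unit_cube v -> f v = (p.[maxv c v] + \sum_(i < n) q.[v i] + d)%:E) ->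
  cube_int f = ((cube_max_poly n p).[c]
    + n%:R * ((poly_prim q).[1] - (poly_prim q).[0]) + d)%:E.
Proof.
elim: n c d f => [|n IH] c d f hc hf /=.
  by rewrite hf; [rewrite /maxv !big_ord0 mul0r addr0 | move=> -[]].
transitivity (\int[mu]_(x in `[0%R, 1%R])
   ((cube_max_poly n p).[Num.max c x]
     + (n%:R * ((poly_prim q).[1] - (poly_prim q).[0]) + d) + q.[x])%:E)%E.
  apply: eq_integral => x; rewrite inE /= in_itv /= => hx.
  rewrite (IH (Num.max c x) (d + q.[x])).
  - by congr EFin; ring.
  - case/andP: hc => c0 c1; case/andP: hx => x0 x1.
    by rewrite le_max c0 /= ge_max c1 x1.
  move=> v hv; rewrite hf; last exact: in_unit_cube_vcons.
  by rewrite maxv_vcons big_vcons; congr EFin; ring.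
rewrite integral_poly_max //; congr EFin.
by rewrite !hornerE /= -addn1 natrD; ring.
Qed.

Lemma cube_max_poly1 n p : (cube_max_poly n p).[1] = p.[1].
Proof. by elim: n => //= n IH; rewrite !hornerE IH; ring. Qed.

Lemma deriv_cube_max_poly n p : deriv (cube_max_poly n p) = 'X^n * deriv p.
Proof.
elim: n => [|n IH] /=; first by rewrite expr0 mul1r.
by rewrite derivB derivD derivC derivM derivX deriv_poly_prim IH exprS; ring.
Qed.

Lemma cube_max_poly0 n p : ((cube_max_poly n p).[0])%:E =
  (p.[1]%:E - \int[mu]_(x in `[0%R, 1%R]) ((x ^+ n * (deriv p).[x])%:E))%E.
Proof.
have := @integral_deriv_poly _ (cube_max_poly n p) 0 1 ler01.
rewrite cube_max_poly1 deriv_cube_max_poly.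
under eq_integral do rewrite hornerM hornerXn.
by move=> ->; rewrite -EFinB; congr EFin; ring.
Qed.

Lemma cube_max_poly0_onemX n j a :
  (cube_max_poly n (a *: (1 - 'X) ^+ j.+1)).[0] = a * j.+1%:R * beta_fun n.+1 j.+1.
Proof.
apply: EFin_inj; rewrite cube_max_poly0.
have -> : deriv (a *: (1 - 'X) ^+ j.+1) = (- a * j.+1%:R) *: (1 - 'X) ^+ j.
  rewrite derivZ deriv_exp derivB derivC derivX /= sub0r.
  by rewrite -!mul_polyC polyCM polyCN polyCMn polyC1; ring.
transitivity ((a *: (1 - 'X) ^+ j.+1).[1]%:E -
  \int[mu]_(x in `[0%R, 1%R]) ((- a * j.+1%:R)%:E * (XMonemX n j x)%:E))%E.
  congr (_ - _)%E; apply: eq_integral => x _; rewrite -EFinM !hornerE.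
  by congr EFin; rewrite /XMonemX /unstable.onem /=; ring.
rewrite integralZl //; last exact: integrable_XMonemX.
rewrite [RHS]EFinM EFin_beta_fun integral_XMonemX_restrict setTI /=.
rewrite !hornerE subrr expr0n /= mulr0 sub0e.
have -> : a * j.+1%:R = - (- a * j.+1%:R) by ring.
by rewrite EFinN mulNe.
Qed.

Lemma cube_int_onemX_pow n j (a b : R) :
  cube_int (fun v : 'I_n -> R =>
    (a * (1 - maxv 0 v) ^+ j.+1 + b * \sum_(i < n) (1 - v i) ^+ j.+1)%:E) =
  (a * (n`! * j.+1`!)%:R / (n + j.+1)`!%:R + b * n%:R / j.+2%:R)%:E.
Proof.
rewrite (@cube_int_max_sum n (a *: (1 - 'X) ^+ j.+1) (b *: (1 - 'X) ^+ j.+1) 0 0);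
  last 2 first.
- by rewrite lexx ler01.
- move=> v _; rewrite mulr_sumr addr0 !hornerE; congr (_ + _)%:E.
  by apply: eq_bigr => i _; rewrite !hornerE.
rewrite cube_max_poly0_onemX poly_primZ !hornerZ -mulrBr integral_poly_prim_onemX.
rewrite beta_fun_fact [j.+1`!]factS addnS !natrM addr0; congr EFin; ring.
Qed.

End CubeIntegral.

Section Observations.
Context {R : realType}.

Lemma sum_bernoulli_weights (m : R) j :
  \sum_(y : {ffun 'I_j -> bool}) \prod_(k < j) (if y k then m else 1 - m) = 1.
Proof.
rewrite -(bigA_distr_bigA (fun _ (b : bool) => if b then m else 1 - m)) /=.
by apply: big1 => k _; rewrite big_bool /= addrC subrK.
Qed.

Lemma sum_bernoulli_weights_all_false (m : R) j :
  \sum_(y : {ffun 'I_j -> bool})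
     (\prod_(k < j) (if y k then m else 1 - m)) * [forall k, ~~ y k]%:R = (1 - m) ^+ j.
Proof.
set y0 : {ffun 'I_j -> bool} := [ffun => false].
rewrite (bigD1 y0) //= [X in _ + X]big1 ?addr0 => [|y ny].
  have -> : [forall k, ~~ y0 k].
    by apply/forallP => k; rewrite ffunE.
  rewrite mulr1 (eq_bigr (fun _ => 1 - m)) => [|k _]; last by rewrite ffunE.
  by rewrite prodr_const card_ord.
suff /negbTE-> : ~~ [forall k, ~~ y k] by rewrite mulr0.
apply: contra ny => /forallP yF; apply/eqP/ffunP => k.
by rewrite ffunE; exact/negbTE/yF.
Qed.

Lemma sum_obs_weight_all_fail n j (mu : 'I_n -> R) i :
  \sum_(x : obs n j) obs_weight mu x * (all_fail x i)%:R = (1 - mu i) ^+ j.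
Proof.
pose w i' (y : {ffun 'I_j -> bool}) :=
  (\prod_(k < j) (if y k then mu i' else 1 - mu i')) *
  (if i' == i then [forall k, ~~ y k]%:R else 1).
transitivity (\sum_(x : obs n j) \prod_(i' < n) w i' (x i')).
  apply: eq_bigr => x _; rewrite big_split /=; congr (_ * _).
  by rewrite (bigD1 i) //= eqxx big1 ?mulr1 // => i' /negbTE ->.
rewrite -(bigA_distr_bigA w) (bigD1 i) //= [X in _ * X]big1 => [|i' /negbTE i'i].
  by rewrite /w eqxx sum_bernoulli_weights_all_false mulr1.
by rewrite /w i'i; under eq_bigr do rewrite mulr1; exact: sum_bernoulli_weights.
Qed.

Lemma best_arm_maxv n (mu : 'I_n.+1 -> R) : in_unit_cube mu ->
  exists2 b, best_arm mu = Some b & mu b = maxv 0 mu.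
Proof.
move=> mu01; rewrite /best_arm; case: pickP => [b /forallP bmax | nomax].
  exists b => //; apply/eqP; rewrite eq_le le_bigmax /=.
  by apply: bigmax_le => [|i _]; [case/andP: (mu01 b) | exact: bmax].
have [i _ imax] := @arg_maxP _ _ _ ord0 xpredT mu isT.
by move: (nomax i); rewrite (introT forallP) // => k; exact: imax.
Qed.

Lemma sum_obs_weight_Be n j (mu : 'I_n.+1 -> R) : in_unit_cube mu ->
  \sum_(x : obs n.+1 j) obs_weight mu x * (Be mu x)%:R = (1 - maxv 0 mu) ^+ j.
Proof.
by case/best_arm_maxv => b bbest <-; rewrite /Be bbest sum_obs_weight_all_fail.
Qed.

Lemma Nnb_sum n j (mu : 'I_n -> R) (x : obs n j) :
  (Nnb mu x)%:R = \sum_(i < n | Some i != best_arm mu) (all_fail x i)%:R :> R.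
Proof.
rewrite /Nnb -sum1_card natr_sum [LHS]big_mkcond [RHS]big_mkcond /=.
apply: eq_bigr => i _; rewrite unfold_in /= asboolb.
by case: (_ != _); case: all_fail.
Qed.

Lemma sum_obs_weight_Nnb n j (mu : 'I_n.+1 -> R) : in_unit_cube mu ->
  \sum_(x : obs n.+1 j) obs_weight mu x * (Nnb mu x)%:R =
  \sum_(i < n.+1) (1 - mu i) ^+ j - (1 - maxv 0 mu) ^+ j.
Proof.
case/best_arm_maxv => b bbest <-.
under eq_bigr do rewrite Nnb_sum bbest mulr_sumr.
rewrite exchange_big /=; under eq_bigr do rewrite sum_obs_weight_all_fail.
rewrite [in RHS](bigD1 b) //= addrAC subrr add0r.
by apply: eq_bigl => i; rewrite (inj_eq Some_inj).
Qed.

End Observations.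

Theorem mainTheorem12 (R : realType) (n j : nat) (hn : (1 <= n)%N) (hj : (1 <= j)%N) :
  bandit_prob (@Be R n j) = ((n`! * j`!)%:R / (n + j)`!%:R)%:E /\
  bandit_expect (fun mu x => (@Nnb R n j mu x)%:R)
    = (n%:R / j.+1%:R - (n`! * j`!)%:R / (n + j)`!%:R)%:E.
Proof.
case: n hn => // n _; case: j hj => // j _.
rewrite /bandit_prob /bandit_expect; split.
- rewrite (@eq_cube_int _ _ _ (fun v => (1 * (1 - maxv 0 v) ^+ j.+1
    + 0 * \sum_(i < n.+1) (1 - v i) ^+ j.+1)%:E)) => [|mu mu01].
    by rewrite cube_int_onemX_pow mul1r !mul0r addr0.
  by rewrite sum_obs_weight_Be // mul1r mul0r addr0.
- rewrite (@eq_cube_int _ _ _ (fun v => (-1 * (1 - maxv 0 v) ^+ j.+1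
    + 1 * \sum_(i < n.+1) (1 - v i) ^+ j.+1)%:E)) => [|mu mu01].
    by rewrite cube_int_onemX_pow; congr EFin; ring.
  by rewrite sum_obs_weight_Nnb // mulN1r mul1r addrC.
Qed.
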